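(* Assume the rank-1 setting described in the context and that Assumption 3 holds. Then for all sufficiently large $n$, for every $C\subseteq V$ with $|C|=r$, every maximizer $D^\star_C$ of $\frac{\mathbb{E}_0[e(D)]}{|D|\log(n/|D|)}$ over nonempty $D\subseteq C$ satisfies $|D^\star_C|\ge r^{1/3}$.
   Context: Rank-1 setting. For each $n$ let $V=\{1,\dots,n\}$ with vertex weights $\theta_i\in(0,1)$ and edge probabilities $p_{ij}=\theta_i\theta_j$ ($i\ne j$). Under $\mathbb{P}_0$ the adjacency entries $A_{ij}$ ($i<j$) of a random simple graph on $V$ are independent $\mathrm{Bern}(p_{ij})$, so that $\mathbb{E}_0[e(D)]=\sum_{i<j,\ i,j\in D}\theta_i\theta_j$, where $e(D)$ is the number of edges inside $D$. $r=r_n$ is a community size. All quantities may depend on $n$, and asymptotics are as $n\to\infty$. Assumption 3. With $\theta_{\max}=\max_i\theta_i$ and $\theta_{\min}=\min_i\theta_i$: $(\theta_{\max}/\theta_{\min})^2=o\big(r^{2/3}\wedge\frac nr\theta_{\min}^2\big)$. *)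

From HB Require Import structures.
From mathcomp Require Import all_boot all_order all_algebra.
From mathcomp Require Import all_classical all_reals all_analysis.
Set Implicit Arguments. Unset Strict Implicit. Unset Printing Implicit Defensive.
Import Order.TTheory GRing.Theory Num.Theory.
Local Open Scope ring_scope.

Section Rank1.
Variable R : realType.

(* theta_max and theta_min over V = 'I_n (weights lie in (0,1), so the
   neutral elements 0 / 1 are harmless for n >= 1). *)
Definition theta_max (n : nat) (th : 'I_n -> R) : R :=
  \big[Num.max/0]_(i < n) th i.
Definition theta_min (n : nat) (th : 'I_n -> R) : R :=
  \big[Num.min/1]_(i < n) th i.

Definition exp_edges (n : nat) (th : 'I_n -> R) (D : {set 'I_n}) : R :=
  \sum_(i in D) \sum_(j in D | (i < j)%N) th i * th j.

Definition objective (n : nat) (th : 'I_n -> R) (D : {set 'I_n}) : R :=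
  exp_edges th D / (#|D|%:R * ln (n%:R / #|D|%:R)).

Definition is_maximizer (n : nat) (th : 'I_n -> R) (C D : {set 'I_n}) : Prop :=
  [/\ D \subset C, D != finset.set0 &
      forall D' : {set 'I_n}, D' \subset C -> D' != finset.set0 ->
        objective th D' <= objective th D].

Definition little_o (a b : nat -> R) : Prop :=
  forall eps : R, 0 < eps -> exists N : nat, forall n : nat, (N <= n)%N ->
    `|a n| <= eps * `|b n|.

Definition assumption3 (theta : forall n : nat, 'I_n -> R) (r : nat -> nat) : Prop :=
  little_o (fun n => (theta_max (theta n) / theta_min (theta n)) ^+ 2)
           (fun n => Num.min ((r n)%:R `^ (2 / 3))
                             ((n%:R / (r n)%:R) * theta_min (theta n) ^+ 2)).
End Rank1.

(* Write m and M for the smallest and largest weight and K = (M/m)^2.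
   Counting ordered pairs, 2 E_0[e(D)] lies between |D| (|D| m^2 - M^2) and
   |D| (|D| M^2 - m^2); since ln (n/|D|) >= ln (n/r) > 0 for D inside C, the
   objective of D is at most (|D| M^2 - m^2) / (2 ln (n/r)) and that of C at
   least (r m^2 - M^2) / (2 ln (n/r)).  So a maximizer has (|D| + 1) K >= r + 1.
   Assumption 3 eventually gives K <= r^(2/3) / 4 (and n > r), and then
   |D| < r^(1/3) would force (|D| + 1) K < (r^(1/3) + 1) r^(2/3) / 4 <= r. *)
From mathcomp Require Import all_boot all_order all_algebra.
From mathcomp Require Import all_classical all_reals all_analysis.
From mathcomp Require Import ring lra.
Set Implicit Arguments. Unset Strict Implicit. Unset Printing Implicit Defensive.
Import Order.TTheory GRing.Theory Num.Theory.
Local Open Scope ring_scope.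

Lemma sum_sym_pairs (V : nmodType) (n : nat) (F : 'I_n -> 'I_n -> V)
    (D : {set 'I_n}) :
  (forall i j, F i j = F j i) ->
  \sum_(i in D) \sum_(j in D) F i j =
  (\sum_(i in D) \sum_(j in D | (i < j)%N) F i j) *+ 2 + \sum_(i in D) F i i.
Proof.
move=> Fsym.
have split_row i : i \in D -> \sum_(j in D) F i j =
    \sum_(j in D | (i < j)%N) F i j + \sum_(j in D | (j < i)%N) F i j + F i i.
  move=> iD; rewrite (bigID (fun j : 'I_n => (i < j)%N)) /= -addrA; congr (_ + _).
  rewrite (bigID (fun j : 'I_n => (j < i)%N)) /=; congr (_ + _).
    by apply: eq_bigl => j; case: (j \in D) => //=; case: ltngtP.
  rewrite (big_pred1 i) // => j /=.
  case: eqVneq => [->|ne]; first by rewrite iD ltnn.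
  by case: (j \in D) => //=; case: ltngtP => // /val_inj eq_ji; rewrite eq_ji eqxx in ne.
have lower_upper : \sum_(i in D) \sum_(j in D | (j < i)%N) F i j =
    \sum_(i in D) \sum_(j in D | (i < j)%N) F i j.
  rewrite (exchange_big_dep (mem D)) /=; last by move=> i j _ /andP[].
  by apply: eq_bigr => j jD; apply: eq_big => [i|i _]; [rewrite jD | apply: Fsym].
by rewrite (eq_bigr _ split_row) !big_split /= lower_upper mulr2n.
Qed.

Section TwoSidedWeights.
Variables (R : realType) (n : nat) (th : 'I_n -> R) (m M : R).
Hypotheses (m_ge0 : 0 <= m) (th_ge : forall i, m <= th i)
  (th_le : forall i, th i <= M).

Lemma sum_card_le (D : {set 'I_n}) (F : 'I_n -> R) c :
  (forall i, F i <= c) -> \sum_(i in D) F i <= #|D|%:R * c.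
Proof. by move=> Fc; rewrite mulr_natl -sumr_const ler_sum. Qed.

Lemma sum_card_ge (D : {set 'I_n}) (F : 'I_n -> R) c :
  (forall i, c <= F i) -> #|D|%:R * c <= \sum_(i in D) F i.
Proof. by move=> Fc; rewrite mulr_natl -sumr_const ler_sum. Qed.

Lemma weight_prod_le i j : th i * th j <= M ^+ 2.
Proof. by rewrite expr2 ler_pM // (le_trans m_ge0). Qed.

Lemma weight_prod_ge i j : m ^+ 2 <= th i * th j.
Proof. by rewrite expr2 ler_pM. Qed.

Lemma exp_edges_double (D : {set 'I_n}) :
  2 * exp_edges th D =
  \sum_(i in D) \sum_(j in D) th i * th j - \sum_(i in D) th i * th i.
Proof.
by rewrite mulr_natl (sum_sym_pairs D (fun i j => mulrC (th i) (th j))) addrK.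
Qed.

Lemma exp_edges_le (D : {set 'I_n}) :
  2 * exp_edges th D <= #|D|%:R * (#|D|%:R * M ^+ 2 - m ^+ 2).
Proof.
rewrite exp_edges_double mulrBr lerB //.
  by apply: sum_card_le => i; apply: sum_card_le => j; apply: weight_prod_le.
by apply: sum_card_ge => i; apply: weight_prod_ge.
Qed.

Lemma exp_edges_ge (D : {set 'I_n}) :
  #|D|%:R * (#|D|%:R * m ^+ 2 - M ^+ 2) <= 2 * exp_edges th D.
Proof.
rewrite exp_edges_double mulrBr lerB //.
  by apply: sum_card_ge => i; apply: sum_card_ge => j; apply: weight_prod_ge.
by apply: sum_card_le => i; apply: weight_prod_le.
Qed.

Lemma ln_ratio_gt0 k : (0 < k < n)%N -> 0 < ln (n%:R / k%:R : R).
Proof.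
by case/andP=> k_gt0 kn; rewrite ln_gt0 // ltr_pdivlMr ?ltr0n // mul1r ltr_nat.
Qed.

Lemma objective_le (D : {set 'I_n}) k : (0 < #|D|)%N -> (#|D| <= k < n)%N ->
  objective th D <= (#|D|%:R * M ^+ 2 - m ^+ 2) / (2 * ln (n%:R / k%:R)).
Proof.
move=> D_gt0 /andP[Dk kn]; have /card_gt0P[i0 _] := D_gt0.
set d : R := #|D|%:R; set Ld := ln (n%:R / d); set Lk := ln (n%:R / k%:R).
have d_ge1 : 1 <= d by rewrite /d (ler_nat R 1).
have k_gt0 : (0 < k)%N := leq_trans D_gt0 Dk.
have Lk_gt0 : 0 < Lk by rewrite ln_ratio_gt0 // k_gt0.
have Ld_gt0 : 0 < Ld by rewrite ln_ratio_gt0 // D_gt0 (leq_ltn_trans Dk kn).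
have Lk_le : Lk <= Ld.
  rewrite ler_ln ?posrE ?divr_gt0 ?ltr0n ?(ltn_trans k_gt0 kn) //.
  by rewrite ler_wpM2l // lef_pV2 ?posrE ?ltr0n // ler_nat.
have mM : m ^+ 2 <= M ^+ 2 := le_trans (weight_prod_ge i0 i0) (weight_prod_le i0 i0).
have E2 : 2 * exp_edges th D <= d * (d * M ^+ 2 - m ^+ 2) := exp_edges_le D.
rewrite /objective -/d -/Ld ler_pdivrMr ?mulr_gt0 //; [|lra].
have -> : (d * M ^+ 2 - m ^+ 2) / (2 * Lk) * (d * Ld) =
    d * (d * M ^+ 2 - m ^+ 2) / 2 * (Ld / Lk).
  by field; rewrite lt0r_neq0.
apply: (@le_trans _ _ (d * (d * M ^+ 2 - m ^+ 2) / 2)).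
  by rewrite ler_pdivlMr // mulrC.
have P_ge0 : 0 <= d * M ^+ 2 - m ^+ 2.
  by rewrite subr_ge0 (le_trans mM) // ler_peMl ?sqr_ge0.
apply: ler_peMr.
  by apply: divr_ge0 => //; apply: mulr_ge0 => //; apply: le_trans d_ge1.
by rewrite ler_pdivlMr // mul1r.
Qed.

Lemma objective_ge (C : {set 'I_n}) : (0 < #|C| < n)%N ->
  (#|C|%:R * m ^+ 2 - M ^+ 2) / (2 * ln (n%:R / #|C|%:R)) <= objective th C.
Proof.
move=> Cn; have /andP[C_gt0 _] := Cn.
set c : R := #|C|%:R; set Lc := ln (n%:R / c).
have c_gt0 : 0 < c by rewrite ltr0n.
have Lc_gt0 : 0 < Lc := ln_ratio_gt0 Cn.
have E2 : c * (c * m ^+ 2 - M ^+ 2) <= 2 * exp_edges th C := exp_edges_ge C.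
rewrite /objective -/c -/Lc ler_pdivlMr ?mulr_gt0 //.
have -> : (c * m ^+ 2 - M ^+ 2) / (2 * Lc) * (c * Lc) =
    c * (c * m ^+ 2 - M ^+ 2) / 2.
  by field; rewrite lt0r_neq0.
by rewrite ler_pdivrMr // [_ * 2]mulrC.
Qed.

Lemma objective_lt_subset (C D : {set 'I_n}) :
  D \subset C -> (0 < #|D|)%N -> (#|C| < n)%N ->
  (#|D|%:R + 1) * M ^+ 2 < (#|C|%:R + 1) * m ^+ 2 ->
  objective th D < objective th C.
Proof.
move=> DC D_gt0 Cn card_lt.
have DC_card := subset_leq_card DC.
have DCn : (#|D| <= #|C| < n)%N by rewrite DC_card.
have C_gt0 : (0 < #|C| < n)%N by rewrite (leq_trans D_gt0 DC_card).
have Lc_gt0 := ln_ratio_gt0 C_gt0.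
apply: le_lt_trans (objective_le D_gt0 DCn) _.
apply: lt_le_trans (objective_ge C_gt0).
by rewrite ltr_pM2r ?invr_gt0 ?mulr_gt0 //; lra.
Qed.

Lemma maximizer_card_ge (C D : {set 'I_n}) : is_maximizer th C D ->
  (#|C| < n)%N -> (#|C|%:R + 1) * m ^+ 2 <= (#|D|%:R + 1) * M ^+ 2.
Proof.
case=> DC; rewrite -card_gt0 => D_gt0 Dmax Cn; rewrite leNgt; apply/negP => card_lt.
have C_gt0 : (0 < #|C|)%N := leq_trans D_gt0 (subset_leq_card DC).
have := Dmax C (subxx C); rewrite -card_gt0 => /(_ C_gt0).
by rewrite leNgt objective_lt_subset.
Qed.

End TwoSidedWeights.

Section Asymptotics.
Variable R : realType.

Definition weight_spread n (th : 'I_n -> R) := (theta_max th / theta_min th) ^+ 2.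

Lemma theta_min_le n (th : 'I_n -> R) i : theta_min th <= th i.
Proof. exact: bigmin_le. Qed.

Lemma theta_max_ge n (th : 'I_n -> R) i : th i <= theta_max th.
Proof. exact: le_bigmax. Qed.

Lemma theta_min_gt0 n (th : 'I_n -> R) : (forall i, 0 < th i) -> 0 < theta_min th.
Proof. by move=> th_gt0; apply: lt_bigmin => // i _; apply: th_gt0. Qed.

Lemma weight_spread_ge1 n (th : 'I_n -> R) (i : 'I_n) :
  0 < theta_min th -> 1 <= weight_spread th.
Proof.
move=> m_gt0; rewrite exprn_ege1 // ler_pdivlMr // mul1r.
exact: le_trans (theta_min_le th i) (theta_max_ge th i).
Qed.

Lemma assumption3_eventually (theta : forall n, 'I_n -> R) r eps :
  0 < eps -> assumption3 theta r -> exists N, forall n, (N <= n)%N ->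
    weight_spread (theta n) <= eps * (r n)%:R `^ (2 / 3) /\
    weight_spread (theta n) <= eps * ((n%:R / (r n)%:R) * theta_min (theta n) ^+ 2).
Proof.
move=> eps_gt0 /(_ eps eps_gt0) [N HN]; exists N => n /HN.
rewrite (ger0_norm (sqr_ge0 _)) ger0_norm; last first.
  by rewrite le_min powR_ge0 mulr_ge0 ?divr_ge0 ?sqr_ge0.
move=> spread_le; split; apply: le_trans spread_le _;
  (apply: ler_wpM2l; [exact: ltW | by rewrite ge_min lexx ?orbT]).
Qed.

Lemma powR_frac (x : R) (k p : nat) : 0 <= x ->
  x `^ (k%:R / p%:R) = (x `^ (1 / p%:R)) ^+ k.
Proof. by move=> x_ge0; rewrite -powR_mulrn ?powR_ge0 // -powRrM mul1r mulrC. Qed.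

Lemma powR_root_natX (x : R) (p : nat) : 0 <= x -> (0 < p)%N ->
  (x `^ (1 / p%:R)) ^+ p = x.
Proof.
by move=> x_ge0 p_gt0; rewrite -powR_frac // divff ?pnatr_eq0 -?lt0n // powRr1.
Qed.

End Asymptotics.

Lemma lt_of_ratio (F : realFieldType) (x y t : F) :
  0 <= x -> 0 <= y -> t < 1 -> 1 <= x / y * t -> y < x.
Proof.
move=> x_ge0 y_ge0 t_lt1 ratio_ge1.
have q_gt0 : 0 < x / y.
  rewrite lt_def divr_ge0 // andbT.
  by apply: contraTneq ratio_ge1 => ->; rewrite mul0r -ltNge ltr01.
have y_gt0 : 0 < y.
  rewrite lt_def y_ge0 andbT.
  by apply: contraTneq q_gt0 => ->; rewrite invr0 mulr0 ltxx.
rewrite -[y]mul1r -ltr_pdivlMr //.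
by apply: le_lt_trans ratio_ge1 _; rewrite gtr_pMr.
Qed.

Lemma le_cube_root (F : realFieldType) (a d K : F) :
  0 <= d -> 1 <= K -> K <= a ^+ 2 / 4 -> a ^+ 3 + 1 <= (d + 1) * K -> a <= d.
Proof.
move=> d_ge0 K_ge1 K_le cube_le; rewrite leNgt; apply/negP => da.
have a_ge2 : 2 <= a by nra.
have : (d + 1) * K < (a + 1) * K by rewrite ltr_pM2r; lra.
have : (a + 1) * K <= (a + 1) * (a ^+ 2 / 4) by rewrite ler_pM2l; lra.
have : (a + 1) * (a ^+ 2 / 4) <= a ^+ 3.
  by rewrite mulrCA [a ^+ 3]exprSr ler_pM2l ?exprn_gt0; lra.
lra.
Qed.

Theorem lemma1 (R : realType) (theta : forall n : nat, 'I_n -> R) (r : nat -> nat)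
  (htheta : forall (n : nat) (i : 'I_n), 0 < theta n i < 1)
  (hA3 : assumption3 theta r) :
  exists N : nat, forall n : nat, (N <= n)%N ->
    forall C : {set 'I_n}, #|C| = r n ->
    forall D : {set 'I_n}, is_maximizer (theta n) C D ->
      (r n)%:R `^ (1 / 3) <= (#|D|%:R : R).
Proof.
have quarter_gt0 : (0 : R) < 1 / 4 by lra.
have [N spread_le] := assumption3_eventually quarter_gt0 hA3.
exists N => n /spread_le[spread_r spread_n] C HC D Dmax.
have [i0 _] : exists i0, i0 \in D by case: Dmax => _ /set0Pn.
set m := theta_min (theta n); set M := theta_max (theta n).
have m_gt0 : 0 < m by apply: theta_min_gt0 => i; case/andP: (htheta n i).
have m_lt1 : m < 1 by case/andP: (htheta n i0) => _; apply: le_lt_trans (theta_min_le _ i0).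
have spread_ge1 := weight_spread_ge1 i0 m_gt0.
have rn : (r n < n)%N.
  rewrite -(ltr_nat R); apply: (lt_of_ratio (t := m ^+ 2)) => //.
    by rewrite expr2; nra.
  by move: spread_ge1 spread_n; rewrite -/m; lra.
have := maximizer_card_ge (ltW m_gt0) (theta_min_le (theta n)) (theta_max_ge (theta n)) Dmax.
rewrite HC => /(_ rn) card_ge.
apply: (le_cube_root (K := weight_spread (theta n))) => //.
  by move: spread_r; rewrite (powR_frac 2 3) // -/m; lra.
rewrite powR_root_natX // /weight_spread -/m -/M expr_div_n mulrA.
by rewrite ler_pdivlMr ?exprn_gt0.
Qed.
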